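(* Let $R$ be a ring with identity such that every element of $R$ is either a sum or a difference of a nilpotent element and an idempotent element (i.e. for each $x\in R$ there exist an idempotent $e$ and a nilpotent $q$ with $x = e+q$ or $x = q - e$). If $2$ is a unit in $R$, then $R/\operatorname{Nil}^*(R) \cong \mathbb{Z}_3$, where $\operatorname{Nil}^*(R)$ denotes the upper nilradical of $R$.
   Context: Rings are associative with identity. The upper nilradical $\operatorname{Nil}^*(R)$ is the largest nil ideal of $R$ (the sum of all nil ideals). $\mathbb{Z}_3$ is the ring of integers modulo $3$. *)

From HB Require Import structures.
From mathcomp Require Import all_boot all_order all_algebra.
Set Implicit Arguments. Unset Strict Implicit. Unset Printing Implicit Defensive.
Import GRing.Theory.
Local Open Scope ring_scope.

Definition idempotent_el (R : nzRingType) (e : R) : Prop := e * e = e.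
Definition nilpotent_el (R : nzRingType) (q : R) : Prop := exists n : nat, q ^+ n = 0.

Definition is_ideal (R : nzRingType) (I : R -> Prop) : Prop :=
  [/\ I 0,
      (forall x y, I x -> I y -> I (x + y)),
      (forall x, I x -> I (- x)),
      (forall r x, I x -> I (r * x)) &
      (forall r x, I x -> I (x * r))].

Definition nil_ideal (R : nzRingType) (I : R -> Prop) : Prop :=
  is_ideal I /\ forall x, I x -> nilpotent_el x.

(* Upper nilradical Nil*(R): the sum of all nil ideals of R, i.e. the set of
   finite sums of elements each lying in some nil ideal. *)
Definition upper_nilradical (R : nzRingType) (x : R) : Prop :=
  exists s : seq R,
    x = \sum_(y <- s) y /\
    (forall y, y \in s -> exists I : R -> Prop, nil_ideal I /\ I y).

From HB Require Import structures.
From mathcomp Require Import all_boot all_order all_algebra.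
From Stdlib Require Import IndefiniteDescription.
Import GRing.Theory.

(* Since 2 is invertible, idempotents are trivial: for an idempotent e the
   involution w = 2e - 1 decomposes as w = g + q or -w = g + q with g
   idempotent and q nilpotent; then q commutes with w, 1 + g is invertible,
   and (1 + g)(1 - e) = -q(1 - e) (resp. the same with e) shows that 1 - e
   (resp. e) is fixed by a nilpotent left factor, hence 0.  So every x is
   nilpotent or differs from 1 or -1 by a nilpotent.  As a nilpotent has no
   one-sided inverse, the nilpotents then form an ideal N containing 3 but
   neither 1 nor 2, and x |-> its class in {0, 1, 2} is a surjective ring
   morphism onto 'Z_3 with kernel N = Nil*(R). *)

Set Implicit Arguments.
Unset Strict Implicit.
Unset Printing Implicit Defensive.

Local Open Scope ring_scope.

Section NilpotentElements.
Variable R : nzRingType.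
Implicit Types a b c q t v w g x : R.

Definition invertible x := exists y, x * y = 1 /\ y * x = 1.

Lemma exprM_inv1 n a b : a * b = 1 -> a ^+ n * b ^+ n = 1.
Proof.
move=> ab; elim: n => [|n IH]; first by rewrite !expr0 mulr1.
by rewrite exprSr exprS mulrA -(mulrA _ a) ab mulr1.
Qed.

Lemma nilpotent_mulr_neq1 q v : nilpotent_el q -> q * v <> 1.
Proof.
move=> [n qn] /(exprM_inv1 n); rewrite qn mul0r => /eqP.
by rewrite eq_sym oner_eq0.
Qed.

Lemma nilpotent_mull_neq1 q v : nilpotent_el q -> v * q <> 1.
Proof.
move=> [n qn] /(exprM_inv1 n); rewrite qn mulr0 => /eqP.
by rewrite eq_sym oner_eq0.
Qed.

Lemma nilpotent0 : nilpotent_el (0 : R).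
Proof. by exists 1%N; rewrite expr1. Qed.

Lemma nilpotentN q : nilpotent_el q -> nilpotent_el (- q).
Proof. by move=> [n qn]; exists n; rewrite exprNn qn mulr0. Qed.

Lemma nilpotentM_comm a b :
  GRing.comm a b -> nilpotent_el a -> nilpotent_el (a * b).
Proof. by move=> cab [n an]; exists n; rewrite exprMn_comm // an mul0r. Qed.

Lemma nilpotent_fixed_eq0 t x : nilpotent_el t -> t * x = x -> x = 0.
Proof.
move=> [n tn] tx; suff <- : t ^+ n * x = x by rewrite tn mul0r.
by elim: n {tn} => [|n IH]; rewrite ?mul1r // exprSr -mulrA tx.
Qed.

Lemma invertibleN x : invertible x -> invertible (- x).
Proof. by move=> [y [xy yx]]; exists (- y); rewrite mulrNN mulrNN. Qed.

Lemma invertible1D q : nilpotent_el q -> invertible (1 + q).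
Proof.
move=> [n qn]; exists (\sum_(i < n) (- q) ^+ i).
have inv : (1 + q) * \sum_(i < n) (- q) ^+ i = 1.
  have := subrX1 (- q) n; rewrite exprNn qn mulr0 sub0r -opprD addrC mulNr.
  by move/oppr_inj.
split=> //; rewrite -[RHS]inv; apply/esym/commr_sum => i _.
by apply: commrX; rewrite /GRing.comm mulrN mulNr mulrDl mulrDr mul1r mulr1.
Qed.

Lemma comm_inv_central c v x :
  (forall y, GRing.comm c y) -> c * v = 1 -> v * c = 1 -> GRing.comm v x.
Proof.
move=> cC cv vc; rewrite /GRing.comm -[v * x]mulr1 -cv mulrA -(mulrA v x) -cC.
by rewrite !mulrA vc mul1r.
Qed.

Lemma nilpotent_sqrD_inj q q' : nilpotent_el q -> nilpotent_el q' ->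
  q * q + q = q' * q' + q' -> q = q'.
Proof.
move=> nq [n q'n] E.
have shift : (q - q') * (1 + q) = - q' * (q - q').
  rewrite mulrDr mulr1 !mulrBl mulNr mulrBr opprB.
  have -> : q' * q' = q * q + q - q' by rewrite E addrK.
  by rewrite addrA [_ + q * q]addrC addrA.
have shiftX m : (q - q') * (1 + q) ^+ m = (- q') ^+ m * (q - q').
  elim: m => [|m IH]; first by rewrite !expr0 mulr1 mul1r.
  by rewrite exprSr mulrA IH -mulrA shift exprSr mulrA.
have [v [qv _]] := invertible1D nq.
apply/eqP; rewrite -subr_eq0; apply/eqP.
by rewrite -[q - q']mulr1 -(exprM_inv1 n qv) mulrA shiftX exprNn q'n !mulr0 !mul0r.
Qed.

Lemma nilpotent_conj a b q :
  b * a = 1 -> nilpotent_el q -> nilpotent_el (a * q * b).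
Proof.
move=> ba [n qn]; exists n.+1.
suff -> : forall m, (a * q * b) ^+ m.+1 = a * q ^+ m.+1 * b.
  by rewrite exprSr qn mul0r mulr0 mul0r.
elim=> [|m IH]; first by rewrite !expr1.
by rewrite [LHS]exprSr IH [q ^+ m.+2]exprSr -!mulrA (mulrA b a) ba mul1r.
Qed.

Lemma sqrD_involution_decomp w g q : w * w = 1 -> idempotent_el g ->
  w = g + q -> q * q + q = 1 + w - (w * g + g * w).
Proof.
move=> ww gg wE; rewrite -{1}ww wE !mulrDl !mulrDr gg.
move: (g * q) (q * g) (q * q) => gq qg qq.
by rewrite [X in _ = X - _](AC (2*2*2) ((4*6)*((1*3)*(5*2)))) addrK.
Qed.

Lemma involution_nilpotent_comm w g q : w * w = 1 -> idempotent_el g ->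
  nilpotent_el q -> w = g + q -> GRing.comm q w.
Proof.
move=> ww gg nq wE.
have gw_idem : idempotent_el (w * g * w).
  by rewrite /idempotent_el -!mulrA (mulrA w w) ww mul1r (mulrA g g) gg.
have wE' : w = w * g * w + w * q * w by rewrite -mulrDl -mulrDr -wE ww mul1r.
(* q and its conjugate w q w are nilpotent solutions of the same equation
   X^2 + X = 1 + w - (w g + g w), which has at most one. *)
have qE : q = w * q * w.
  apply: nilpotent_sqrD_inj => //; first exact: nilpotent_conj.
  rewrite (sqrD_involution_decomp ww gg wE) (sqrD_involution_decomp ww gw_idem wE').
  by rewrite !mulrA ww mul1r -(mulrA _ w w) ww mulr1 (addrC (g * w)).
by rewrite /GRing.comm {1}qE -mulrA ww mulr1.
Qed.

Lemma upper_nilradicalE x : is_ideal (@nilpotent_el R) ->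
  upper_nilradical x <-> nilpotent_el x.
Proof.
move=> nI; have [_ ND _ _ _] := nI; split=> [[s [-> nil_s]] | nx].
  elim: s nil_s => [|y s IH] nil_s; first by rewrite big_nil; apply: nilpotent0.
  rewrite big_cons; apply: ND.
    by have [I [[_ nilI] Iy]] := nil_s y (mem_head _ _); apply: nilI.
  by apply: IH => z zs; apply: nil_s; rewrite inE zs orbT.
exists [:: x]; split=> [|y]; first by rewrite big_seq1.
by rewrite inE => /eqP ->; exists (@nilpotent_el R).
Qed.

Definition nil_equiv x y := nilpotent_el (x - y).

Lemma nil_equiv_refl x : nil_equiv x x.
Proof. by rewrite /nil_equiv subrr; apply: nilpotent0. Qed.

Lemma nil_equiv_sym x y : nil_equiv x y -> nil_equiv y x.
Proof. by move=> nxy; rewrite /nil_equiv -opprB; apply: nilpotentN. Qed.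

End NilpotentElements.

Section TwoInvertible.
Variables (R : nzRingType) (u : R).
Hypotheses (two_u : 2%:R * u = 1) (u_two : u * 2%:R = 1).
Implicit Types a b e r v w g q x : R.

Lemma half_central x : GRing.comm u x.
Proof. by apply: comm_inv_central two_u u_two => y; apply/commr_sym/commr_nat. Qed.

Lemma involution_decomp_eigen_eq0 w g q x : w * w = 1 -> idempotent_el g ->
  nilpotent_el q -> w = g + q -> w * x = - x -> x = 0.
Proof.
move=> ww gg nq wE wx.
have qg : GRing.comm q g.
  have -> : g = w - q by rewrite wE addrK.
  by apply: commrB; [exact: involution_nilpotent_comm wE | exact: commr_refl].
(* 1 + g has inverse 1 - g/2. *)
have halfg : u * g + u * g = g by rewrite -mulrDl -mulr2n -mulr_natr u_two mul1r.
have inv1g : (1 - u * g) * (1 + g) = 1.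
  rewrite mulrDr mulr1 mulrBl mul1r -mulrA gg.
  by rewrite -[X in _ + (X - _)]halfg addrK subrK.
have gx : (1 + g) * x = - (q * x).
  by rewrite mulrDl mul1r -[x in x + _]opprK -wx wE mulrDl opprD addrAC addNr add0r.
apply: (@nilpotent_fixed_eq0 _ (- ((1 - u * g) * q))).
  have cq : GRing.comm q (1 - u * g).
    by apply/commrB/commrM => //; [exact: commr1 | exact/commr_sym/half_central].
  by rewrite -cq; apply/nilpotentN/nilpotentM_comm.
by rewrite mulNr -mulrA -mulrN -gx mulrA inv1g mul1r.
Qed.

Hypothesis weakly_nil_clean : forall x : R, exists e q : R,
  idempotent_el e /\ nilpotent_el q /\ (x = e + q \/ x = q - e).

Lemma idempotent01 e : idempotent_el e -> e = 0 \/ e = 1.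
Proof.
move=> ee; have ef : e * (1 - e) = 0 by rewrite mulrBr mulr1 ee subrr.
have fe : (1 - e) * e = 0 by rewrite mulrBl mul1r ee subrr.
have ff : (1 - e) * (1 - e) = 1 - e by rewrite mulrBr mulr1 fe subr0.
set w := e - (1 - e).
have ww : w * w = 1.
  rewrite mulrBl (mulrBr e) (mulrBr (1 - e)) ee ef fe ff subr0 sub0r opprK.
  by rewrite addrCA subrr addr0.
have [g [q [gg [nq [wE|wE]]]]] := weakly_nil_clean w.
  right; apply/eqP; rewrite eq_sym -subr_eq0; apply/eqP.
  by apply: involution_decomp_eigen_eq0 ww gg nq wE _; rewrite mulrBl ef ff sub0r.
left; apply: (involution_decomp_eigen_eq0 (w := - w) (g := g) (q := - q)) => //.
- by rewrite mulrNN.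
- exact: nilpotentN.
- by move: wE => ->; rewrite opprB addrC.
- by rewrite mulNr mulrBl ee fe subr0.
Qed.

Lemma nilpotent_or_shift x :
  nilpotent_el x \/ nilpotent_el (x - 1) \/ nilpotent_el (x + 1).
Proof.
have [e [q [ee [nq xE]]]] := weakly_nil_clean x.
have [e0 | e1] := idempotent01 ee; move: xE; rewrite ?e0 ?e1.
  by case=> ->; left; rewrite ?add0r ?subr0.
by case=> ->; right; [left; rewrite addrC addKr | right; rewrite subrK].
Qed.

Lemma nilpotent_or_invertible x : nilpotent_el x \/ invertible x.
Proof.
have [nx | [nx | nx]] := nilpotent_or_shift x; [by left | right..].
  by rewrite -[x](subrK 1) addrC; apply: invertible1D.
have -> : x = - (1 + - (x + 1)) by rewrite opprD opprK addrCA addNr addr0.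
exact/invertibleN/invertible1D/nilpotentN.
Qed.

Lemma nilpotentMl r q : nilpotent_el q -> nilpotent_el (r * q).
Proof.
move=> nq; have [// | [v [_ vrq]]] := nilpotent_or_invertible (r * q).
by move: vrq; rewrite mulrA => /(nilpotent_mull_neq1 nq) [].
Qed.

Lemma nilpotentMr r q : nilpotent_el q -> nilpotent_el (q * r).
Proof.
move=> nq; have [// | [v [qrv _]]] := nilpotent_or_invertible (q * r).
by move: qrv; rewrite -mulrA => /(nilpotent_mulr_neq1 nq) [].
Qed.

Lemma nilpotentD a b : nilpotent_el a -> nilpotent_el b -> nilpotent_el (a + b).
Proof.
move=> na nb; have [// | [v [abv _]]] := nilpotent_or_invertible (a + b).
have [t [bvt _]] : invertible (b * v).
  have -> : b * v = 1 + - (a * v) by rewrite -abv mulrDl addrC addKr.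
  exact/invertible1D/nilpotentN/nilpotentMr.
by move: bvt; rewrite -mulrA => /(nilpotent_mulr_neq1 nb) [].
Qed.

Lemma nilpotent_ideal : is_ideal (@nilpotent_el R).
Proof.
by split; [exact: nilpotent0 | exact: nilpotentD | exact: nilpotentN
           | exact: nilpotentMl | exact: nilpotentMr].
Qed.

Lemma nil_equiv_trans y x z : nil_equiv x y -> nil_equiv y z -> nil_equiv x z.
Proof. by move=> xy yz; rewrite /nil_equiv -(subrKA y); apply: nilpotentD. Qed.

Lemma nil_equivD x x' y y' :
  nil_equiv x x' -> nil_equiv y y' -> nil_equiv (x + y) (x' + y').
Proof. by move=> xx yy; rewrite /nil_equiv opprD addrACA; apply: nilpotentD. Qed.

Lemma nil_equivM x x' y y' :
  nil_equiv x x' -> nil_equiv y y' -> nil_equiv (x * y) (x' * y').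
Proof.
move=> xx yy; rewrite /nil_equiv -(subrKA (x' * y)) -mulrBl -mulrBr.
by apply: nilpotentD; [apply: nilpotentMr | apply: nilpotentMl].
Qed.

Lemma nilpotent_natr3 : nilpotent_el (3%:R : R).
Proof.
have [n2 | [n1 | n3]] := nilpotent_or_shift 2%:R; last by rewrite -natr1.
  by case: (nilpotent_mulr_neq1 n2 two_u).
by move: n1; rewrite -natr1 addrK => /nilpotent_mulr_neq1/(_ (mulr1 1)) [].
Qed.

Lemma natr_mod3 n : nil_equiv (n%:R : R) (n %% 3)%:R.
Proof.
rewrite /nil_equiv {1}(divn_eq n 3) natrD natrM addrK.
exact/nilpotentMl/nilpotent_natr3.
Qed.

Lemma Z3_natr_inj (a b : 'Z_3) : nil_equiv ((val a)%:R : R) (val b)%:R -> a = b.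
Proof.
wlog le_ba : a b / (val b <= val a)%N.
  move=> IH ab; case: (leqP (val b) (val a)) => [le | /ltnW le]; first exact: IH.
  by apply/esym/IH => //; apply: nil_equiv_sym.
rewrite /nil_equiv -natrB // => nk; apply/val_inj/eqP.
rewrite eqn_leq le_ba andbT -subn_eq0.
move: nk (leq_ltn_trans (leq_subr (val b) (val a)) (ltn_ord a)).
case: (val a - val b)%N => [|[|[|k]]] // nk _.
  by case: (nilpotent_mulr_neq1 nk (mulr1 1)).
by case: (nilpotent_mulr_neq1 nk two_u).
Qed.

Lemma residue_exists x : exists k : 'Z_3, nil_equiv x (val k)%:R.
Proof.
have [n0 | [n1 | n2]] := nilpotent_or_shift x.
- by exists 0; rewrite /nil_equiv subr0.
- by exists 1.
exists (-1); apply: (@nil_equiv_trans (-1)); first by rewrite /nil_equiv opprK.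
by rewrite /nil_equiv -opprD addrC natr1; apply/nilpotentN/nilpotent_natr3.
Qed.

Definition residue x : 'Z_3 :=
  proj1_sig (constructive_indefinite_description _ (residue_exists x)).

Lemma residue_spec x : nil_equiv x (val (residue x))%:R.
Proof.
exact: proj2_sig (constructive_indefinite_description _ (residue_exists x)).
Qed.

Lemma residueP x k : nil_equiv x (val k)%:R -> residue x = k.
Proof.
move=> xk; apply: Z3_natr_inj; apply: nil_equiv_trans xk.
exact/nil_equiv_sym/residue_spec.
Qed.

Lemma residue0 : residue 0 = 0.
Proof. exact/residueP/nil_equiv_refl. Qed.

Lemma residue1 : residue 1 = 1.
Proof. exact/residueP/nil_equiv_refl. Qed.

Lemma residueD : {morph residue : x y / x + y}.
Proof.
move=> x y; apply: residueP; apply: nil_equiv_trans (natr_mod3 _).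
by rewrite natrD; apply: nil_equivD; apply: residue_spec.
Qed.

Lemma residueM : {morph residue : x y / x * y}.
Proof.
move=> x y; apply: residueP; apply: nil_equiv_trans (natr_mod3 _).
by rewrite natrM; apply: nil_equivM; apply: residue_spec.
Qed.

Definition residue_rmorphism : {rmorphism R -> 'Z_3} :=
  HB.pack residue (GRing.isNmodMorphism.Build _ _ residue (residue0, residueD))
    (GRing.isMonoidMorphism.Build _ _ residue (residue1, residueM)).

Lemma residue_surj z : exists x, residue_rmorphism x = z.
Proof. by exists (val z)%:R; apply/residueP/nil_equiv_refl. Qed.

Lemma residue_eq0 x : residue_rmorphism x = 0 <-> nilpotent_el x.
Proof.
split=> [x0 | nx]; last by apply: residueP; rewrite /nil_equiv subr0.
by have := residue_spec x; rewrite [residue x]x0 /nil_equiv subr0.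
Qed.

End TwoInvertible.

Theorem lemma2 (R : nzRingType) :
  (forall x : R, exists e q : R,
      idempotent_el e /\ nilpotent_el q /\ (x = e + q \/ x = q - e)) ->
  (exists u : R, 2%:R * u = 1 /\ u * 2%:R = 1) ->
  exists f : {rmorphism R -> 'Z_3},
    (forall z : 'Z_3, exists x : R, f x = z) /\
    (forall x : R, f x = 0 <-> upper_nilradical x).
Proof.
move=> weakly_nil_clean [u [two_u u_two]].
have nI := nilpotent_ideal two_u u_two weakly_nil_clean.
exists (residue_rmorphism two_u u_two weakly_nil_clean); split=> [z | x].
  exact: residue_surj.
by rewrite upper_nilradicalE //; apply: residue_eq0.
Qed.
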